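(* Let $p(x,y)\in\mathbb{R}[x,y]$ be a real stable polynomial which is quadratic with respect to $x$. Suppose $(x_0,y_0)\in\mathbf{Ab}_p$ and $(x_0+\delta,y_0)\in\mathbf{Ab}_{q}$, where $q=(1-\frac12\partial_x^2)p$. Then: (i) if $\delta=1$, then $\Phi_q^y(x_0+\delta,y_0)\le\Phi_p^y(x_0,y_0)$; (ii) if $\delta\in(0,1)$ and $\Phi_p^x(x_0,y_0)\le\frac{\delta}{1-\delta^2}$, then $\Phi_q^y(x_0+\delta,y_0)\le\Phi_p^y(x_0,y_0)$.
   Context: A polynomial $p\in\mathbb{R}[z_1,\ldots,z_n]$ is real stable if $p(z_1,\ldots,z_n)\neq0$ whenever $\mathrm{Im}(z_i)>0$ for all $i$. A point $\mathbf{z}\in\mathbb{R}^n$ is above the roots of $p$ if $p(\mathbf{z}+\mathbf{t})>0$ for all $\mathbf{t}\in\mathbb{R}^n_{\ge0}$; $\mathbf{Ab}_p$ denotes the set of such points. For a real stable $p$ and $\mathbf{z}\in\mathbf{Ab}_p$, the barrier function of $p$ in direction $i$ is $\Phi_p^i(\mathbf{z})=\partial_{z_i}p(\mathbf{z})/p(\mathbf{z})$; for bivariate $p(x,y)$ the directions are written $x$ and $y$. *)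

From mathcomp Require Import all_boot all_algebra.
From mathcomp Require Import complex reals.
Import GRing.Theory Num.Theory.
Local Open Scope ring_scope.

(* A bivariate polynomial p(x,y) is represented as p : {poly {poly R}}:
   the OUTER variable is x, the coefficients are polynomials in y. *)

Definition eval2 {K : comNzRingType} (p : {poly {poly K}}) (a b : K) : K :=
  (p.[a%:P]).[b].

Definition dx {K : comNzRingType} (p : {poly {poly K}}) : {poly {poly K}} :=
  p^`().
Definition dy {K : comNzRingType} (p : {poly {poly K}}) : {poly {poly K}} :=
  map_poly (fun c : {poly K} => c^`()) p.

Definition complexify {R : realType} (p : {poly {poly R}}) : {poly {poly R[i]}} :=
  map_poly (map_poly (fun c : R => (c%:C)%C)) p.

Definition real_stable {R : realType} (p : {poly {poly R}}) : Prop :=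
  forall z1 z2 : R[i], 0 < complex.Im z1 -> 0 < complex.Im z2 ->
    eval2 (complexify p) z1 z2 != 0.

Definition quadratic_in_x {R : realType} (p : {poly {poly R}}) : Prop :=
  size p = 3%N.

Definition above_roots {R : realType} (p : {poly {poly R}}) (a b : R) : Prop :=
  forall t1 t2 : R, 0 <= t1 -> 0 <= t2 -> 0 < eval2 p (a + t1) (b + t2).

Definition barrier_x {R : realType} (p : {poly {poly R}}) (a b : R) : R :=
  eval2 (dx p) a b / eval2 p a b.
Definition barrier_y {R : realType} (p : {poly {poly R}}) (a b : R) : R :=
  eval2 (dy p) a b / eval2 p a b.

Definition op_q {R : realType} (p : {poly {poly R}}) : {poly {poly R}} :=
  p - ((2 : R)^-1)%:P%:P * dx (dx p).

From mathcomp Require Import all_boot all_order all_algebra.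
From mathcomp Require Import complex reals.
From mathcomp Require Import ring lra.
Import Order.TTheory GRing.Theory Num.Theory.
Local Open Scope ring_scope.

(* For real x and e > 0 the polynomial w |-> p(x + ie, w) has no zero in the
   upper half plane, so writing it as a product of linear factors shows
   Im (F'(y0) F(y0)^* ) <= 0.  For P = p(., y0) and S = dy p(., y0), both of
   degree at most 2 in x, this imaginary part is e W(x) + e^3 (...), where
   W = P S' - P' S is their Wronskian; hence W <= 0 on the real line.
   Around x0, W(x0 + u) = al u^2 + 2 be u + ga is a nonpositive quadratic, so
   ga <= 0 and be^2 <= al ga.  Since q(., y0) = P - P_2, the comparison of the
   y-barriers is equivalent to  delta ga <= (1 - delta^2) be.  For delta = 1
   this is ga <= 0; for delta < 1 and be < 0 it follows from be^2 <= al ga,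
   the identity P_2 ga + P(x0) al = P'(x0) be and the bound on the x-barrier. *)

Section QuadraticInequalities.
Context {R : realFieldType}.
Implicit Types a b c m al be ga W Z : R.

Lemma deg2_lead_ge0 a b c m :
  (forall t, 0 <= t -> m <= a * t ^+ 2 + b * t + c) -> 0 <= a.
Proof.
move=> Hlb; rewrite leNgt; apply/negP => a_lt0.
pose K := `|b| + `|c - m| + 1.
pose t := K / - a + 1.
have K_gt0 : 0 < K by rewrite ltr_wpDl // addr_ge0.
have t_ge1 : 1 <= t by rewrite lerDr divr_ge0 // ltW // oppr_gt0.
have at_eq : a * t = - K + a.
  by rewrite /t; field; rewrite ?oppr_eq0 lt_eqF.
have := Hlb t (le_trans ler01 t_ge1).
have -> : a * t ^+ 2 + b * t + c = t * (- K + a + b) + c by rewrite -at_eq; ring.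
have slope_le : - K + a + b <= - `|c - m| - 1.
  by rewrite /K; have := ler_norm b; lra.
have tail_ge0 : 0 <= (t - 1) * (`|c - m| + 1).
  by rewrite mulr_ge0 // ?subr_ge0 // addr_ge0.
have slope_gap_ge0 : 0 <= t * (- `|c - m| - 1 - (- K + a + b)).
  by rewrite mulr_ge0 ?subr_ge0 // (le_trans ler01 t_ge1).
have := ler_norm (c - m); lra.
Qed.

Lemma deg2_le0_discr {al be ga} :
  (forall u, al * u ^+ 2 + 2 * be * u + ga <= 0) -> be ^+ 2 <= al * ga.
Proof.
move=> Hle0.
have : 0 <= - al.
  apply: (deg2_lead_ge0 _ (- (2 * be)) (- ga) 0) => u _.
  by have := Hle0 u; lra.
rewrite oppr_ge0 le_eqVlt => /orP[/eqP al0 | al_lt0].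
  have -> : be = 0.
    apply/eqP; apply: contraT => be_neq0.
    have := Hle0 ((1 - ga) / (2 * be)).
    by rewrite al0 mul0r add0r mulrCA divff ?mulf_neq0 // ?pnatr_eq0 // mulr1; lra.
  by rewrite al0 expr0n mul0r.
have := Hle0 (- be / al).
have -> : al * (- be / al) ^+ 2 + 2 * be * (- be / al) + ga = (al * ga - be ^+ 2) / al.
  by field; rewrite lt_eqF.
by rewrite ler_ndivrMr // mul0r subr_ge0.
Qed.

Lemma le0_of_cubic_perturbation W Z :
  (forall e, 0 < e -> e * W + e ^+ 3 * Z <= 0) -> W <= 0.
Proof.
move=> Hle0; apply/ler_addgt0Pr => eps eps_gt0; rewrite add0r.
pose e := eps / (eps + `|Z|).
have den_gt0 : 0 < eps + `|Z| by rewrite ltr_wpDr.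
have e_gt0 : 0 < e by rewrite divr_gt0.
have e_le1 : e <= 1 by rewrite ler_pdivrMr // mul1r lerDl.
have eZ_le : e * `|Z| <= eps.
  by rewrite mulrAC ler_pdivrMr // mulrDr lerDr mulr_ge0 // ltW.
have W_le : W <= - (e ^+ 2 * Z).
  by have := Hle0 e e_gt0; rewrite exprS -mulrA -mulrDr pmulr_rle0 //; lra.
have NZ_le : - Z <= `|Z| by rewrite -normrN ler_norm.
have e2_term_ge0 : 0 <= e * e * (`|Z| + Z).
  by apply: mulr_ge0; [rewrite mulr_ge0 // ltW | lra].
have e_term_ge0 : 0 <= e * (1 - e) * `|Z|.
  by apply/mulr_ge0/normr_ge0/mulr_ge0; [exact: ltW | rewrite subr_ge0].
lra.
Qed.

Lemma deg2_shifted_ratio_le (P0 P1 P2 S0 S1 S2 d : R) :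
  (forall u, (P0 + P1 * u + P2 * u ^+ 2) * (S1 + 2 * S2 * u)
             - (P1 + 2 * P2 * u) * (S0 + S1 * u + S2 * u ^+ 2) <= 0) ->
  0 <= P2 -> 0 < P0 -> 0 < P0 + P1 * d + P2 * d ^+ 2 - P2 ->
  d = 1 \/ 0 < d < 1 /\ P1 / P0 <= d / (1 - d ^+ 2) ->
  (S0 + S1 * d + S2 * d ^+ 2 - S2) / (P0 + P1 * d + P2 * d ^+ 2 - P2) <= S0 / P0.
Proof.
move=> HW P2_ge0 P0_gt0 Pd_gt0 Hd.
set al := P1 * S2 - P2 * S1; set be := P0 * S2 - S0 * P2; set ga := P0 * S1 - P1 * S0.
have Hquad u : al * u ^+ 2 + 2 * be * u + ga <= 0.
  by have := HW u; rewrite /al /be /ga; lra.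
have ga_le0 : ga <= 0 by have := Hquad 0; lra.
have key : (S0 + S1 * d + S2 * d ^+ 2 - S2) * P0 - S0 * (P0 + P1 * d + P2 * d ^+ 2 - P2)
           = d * ga - (1 - d ^+ 2) * be by rewrite /ga /be; ring.
rewrite ler_pdivrMr // mulrAC ler_pdivlMr // -subr_le0 key.
case: Hd => [-> | [/andP[d_gt0 d_lt1] HPx]].
  by rewrite expr1n subrr mul0r subr0 mul1r.
have w_gt0 : 0 < 1 - d ^+ 2 by rewrite subr_gt0 expr2; nra.
have {}HPx : P1 * (1 - d ^+ 2) <= d * P0.
  by move: HPx; rewrite ler_pdivrMr // mulrAC ler_pdivlMr // mulrC.
have [be_ge0 | be_lt0] := leP 0 be.
  have := mulr_ge0 (ltW w_gt0) be_ge0; have := mulr_ge0_le0 (ltW d_gt0) ga_le0; lra.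
have Nbe_gt0 : 0 < - be by rewrite oppr_gt0.
have Nga_ge0 : 0 <= - ga by rewrite oppr_ge0.
have rel : P2 * ga + P0 * al = P1 * be by rewrite /al /be /ga; ring.
have P0_Nal_le : P0 * - al <= P1 * - be by have := mulr_ge0_le0 P2_ge0 ga_le0; lra.
have Nal_le : (1 - d ^+ 2) * - al <= d * - be.
  rewrite -(ler_pM2l P0_gt0); have := ler_wpM2r (ltW Nbe_gt0) HPx.
  have := ler_wpM2l (ltW w_gt0) P0_Nal_le; lra.
have be2_le : (1 - d ^+ 2) * be ^+ 2 <= d * - be * - ga.
  have := ler_wpM2l (ltW w_gt0) (deg2_le0_discr Hquad).
  have := ler_wpM2r Nga_ge0 Nal_le; lra.
rewrite -subr_le0 -(pmulr_rle0 _ Nbe_gt0); lra.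
Qed.

End QuadraticInequalities.

Section Deg2Horner.
Context {K : comNzRingType}.
Implicit Types (P S : {poly K}) (x u : K).

Definition wronskian P S : {poly K} := P * S^`() - P^`() * S.

Lemma horner_wronskian P S x :
  (wronskian P S).[x] = P.[x] * S^`().[x] - P^`().[x] * S.[x].
Proof. by rewrite /wronskian hornerD hornerN !hornerM. Qed.

Lemma size_deriv_le P : (size P^`() <= size P)%N.
Proof. exact: leq_trans (size_poly _ _) (leq_pred _). Qed.

Lemma horner_deg2 P x : (size P <= 3)%N -> P.[x] = P`_0 + P`_1 * x + P`_2 * x ^+ 2.
Proof.
move=> sizeP; rewrite (horner_coef_wide _ sizeP).
by rewrite !big_ord_recr big_ord0 /= add0r expr0 mulr1 expr1.
Qed.

Lemma deriv_deg2 P x : (size P <= 3)%N -> P^`().[x] = P`_1 + 2 * P`_2 * x.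
Proof.
move=> sizeP; rewrite horner_deg2; last exact: leq_trans (size_deriv_le P) sizeP.
rewrite !coef_deriv [_`_3]nth_default // mulr_natl; ring.
Qed.

Lemma deriv2_deg2 P x : (size P <= 3)%N -> P^`()^`().[x] = 2 * P`_2.
Proof.
move=> sizeP; rewrite deriv_deg2; last exact: leq_trans (size_deriv_le P) sizeP.
by rewrite !coef_deriv [P`_3]nth_default // mul0rn mulr0 mul0r addr0 mulr_natl.
Qed.

Lemma horner_deg2_shift P x u :
  (size P <= 3)%N -> P.[x + u] = P.[x] + P^`().[x] * u + P`_2 * u ^+ 2.
Proof. by move=> sizeP; rewrite deriv_deg2 // !horner_deg2 //; ring. Qed.

Lemma deriv_deg2_shift P x u :
  (size P <= 3)%N -> P^`().[x + u] = P^`().[x] + 2 * P`_2 * u.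
Proof. by move=> sizeP; rewrite !deriv_deg2 //; ring. Qed.

End Deg2Horner.

Section UpperHalfPlane.
Context {R : rcfType}.
Local Open Scope complex_scope.
Local Notation Re := complex.Re.
Local Notation Im := complex.Im.
Local Notation rc := (real_complex R).

Lemma Im_mul_conjc (w v : R[i]) : Im (w * v^*) = Im w * Re v - Re w * Im v.
Proof. by case: w => a b; case: v => c d /=; ring. Qed.

Lemma Im_deriv_prod_XsubC_conjc_le0 (r : seq R[i]) (x : R) :
  {in r, forall z, Im z <= 0} ->
  Im ((\prod_(z <- r) ('X - z%:P))^`().[x%:C] * ((\prod_(z <- r) ('X - z%:P)).[x%:C])^*) <= 0.
Proof.
elim: r => [|z r IH] Hr; first by rewrite big_nil derivC horner0 mul0r.
rewrite big_cons derivM derivXsubC mul1r !hornerE.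
have Imz_le0 : Im z <= 0 by apply: Hr; rewrite mem_head.
have := IH (fun w wr => Hr w (mem_behead (s := z :: r) wr)).
set h := (\prod_(j <- r) _).[_]; set k := (_^`()).[_].
rewrite !Im_mul_conjc; clear Hr IH; case: z h k Imz_le0 => [z1 z2] [h1 h2] [k1 k2] /= Imz_le0 IHk.
(* For G = (X - z) H at x:  Im (G' G^* ) = |H|^2 Im z + |x - z|^2 Im (H' H^* ). *)
have -> : (h2 + ((x - z1) * k2 + (0 - z2) * k1)) * ((x - z1) * h1 - (0 - z2) * h2)
          - (h1 + ((x - z1) * k1 - (0 - z2) * k2)) * ((x - z1) * h2 + (0 - z2) * h1)
          = (h1 ^+ 2 + h2 ^+ 2) * z2 + ((x - z1) ^+ 2 + z2 ^+ 2) * (k2 * h1 - k1 * h2).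
  by ring.
by rewrite -[0]addr0 lerD // mulr_ge0_le0 // addr_ge0 // sqr_ge0.
Qed.

Lemma Im_deriv_conjc_le0 (F : {poly R[i]}) (x : R) :
  (forall z, 0 < Im z -> F.[z] != 0) -> Im (F^`().[x%:C] * (F.[x%:C])^*) <= 0.
Proof.
move=> Fneq0; have [r Fr] := closed_field_poly_normal F.
have roots_lower : {in r, forall z, Im z <= 0}.
  move=> z zr; rewrite leNgt; apply/negP => /Fneq0.
  have /rootP : root (\prod_(w <- r) ('X - w%:P)) z by rewrite root_prod_XsubC.
  by rewrite Fr hornerZ => ->; rewrite mulr0 eqxx.
have Im_scale (c w v : R[i]) :
  Im (c * w * (c * v)^*) = (Re c ^+ 2 + Im c ^+ 2) * Im (w * v^*).
  by case: c w v => [c1 c2] [w1 w2] [v1 v2] /=; ring.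
rewrite Fr derivZ !hornerZ Im_scale mulr_ge0_le0 ?addr_ge0 ?sqr_ge0 //.
exact: Im_deriv_prod_XsubC_conjc_le0.
Qed.

Lemma deg2_wronskian_le0 (P S : {poly R}) :
  (size P <= 3)%N -> (size S <= 3)%N ->
  (forall z, 0 < Im z -> Im ((map_poly rc S).[z] * ((map_poly rc P).[z])^*) <= 0) ->
  forall x, (wronskian P S).[x] <= 0.
Proof.
move=> sizeP sizeS HIm x; rewrite horner_wronskian.
apply: (le0_of_cubic_perturbation _ (S`_2 * P^`().[x] - P`_2 * S^`().[x])) => e e_gt0.
have <- : Im ((map_poly rc S).[x +i* e] * ((map_poly rc P).[x +i* e])^*)
          = e * (P.[x] * S^`().[x] - P^`().[x] * S.[x])
            + e ^+ 3 * (S`_2 * P^`().[x] - P`_2 * S^`().[x]).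
  rewrite Im_mul_conjc !deriv_deg2 // !horner_deg2 ?size_map_poly // !coef_map /=.
  ring.
exact: HIm.
Qed.

End UpperHalfPlane.

Section Slices.
Context {K : comNzRingType}.
Implicit Types (p : {poly {poly K}}) (x y : K).

Definition slice y p : {poly K} := map_poly (horner_eval y) p.

Lemma size_slice_le y p : (size (slice y p) <= size p)%N.
Proof. exact: size_poly. Qed.

Lemma coef_dy p i : (dy p)`_i = (p`_i)^`().
Proof. by rewrite coef_map_id0 // deriv0. Qed.

Lemma size_dy_le p : (size (dy p) <= size p)%N.
Proof. exact: size_poly. Qed.

Lemma size_slice_dy_le y p : (size (slice y (dy p)) <= size p)%N.
Proof. exact: leq_trans (size_slice_le y _) (size_dy_le p). Qed.

Lemma eval2_slice p x y : eval2 p x y = (slice y p).[x].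
Proof. by rewrite /eval2 -[_.[y]]/(horner_eval y _) -horner_map /= horner_evalE hornerC. Qed.

Lemma slice_dx y p : slice y (dx p) = (slice y p)^`().
Proof. by rewrite /slice /dx deriv_map. Qed.

Lemma dy_dx p : dy (dx p) = dx (dy p).
Proof. by apply/polyP => i; rewrite !(coef_dy, coef_deriv) derivMn. Qed.

Lemma deriv_horner_polyC p x : (p.[x%:P])^`() = (dy p).[x%:P].
Proof.
rewrite horner_coef (horner_coef_wide _ (size_dy_le p)) raddf_sum.
apply: eq_bigr => i _.
by rewrite coef_dy -rmorphXn /= mulrC deriv_mulC mulrC.
Qed.

End Slices.

Section Barriers.
Context {R : realType}.
Implicit Types (p : {poly {poly R}}) (P S : {poly R}).

Lemma deg2_barrier_shift_le P S x0 d :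
  (size P <= 3)%N -> (size S <= 3)%N ->
  (forall x, (wronskian P S).[x] <= 0) ->
  (forall t, 0 <= t -> 0 < P.[x0 + t]) ->
  0 < P.[x0 + d] - P`_2 ->
  d = 1 \/ 0 < d < 1 /\ P^`().[x0] / P.[x0] <= d / (1 - d ^+ 2) ->
  (S.[x0 + d] - S`_2) / (P.[x0 + d] - P`_2) <= S.[x0] / P.[x0].
Proof.
move=> sizeP sizeS W_le0 P_gt0 Pd_gt0 Hd.
rewrite !horner_deg2_shift // in Pd_gt0 *.
apply: deg2_shifted_ratio_le Hd => //.
- move=> u; have := W_le0 (x0 + u).
  by rewrite horner_wronskian !deriv_deg2_shift // !horner_deg2_shift.
- apply: (deg2_lead_ge0 _ (P^`().[x0]) (P.[x0]) 0) => t t_ge0.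
  by have := P_gt0 t t_ge0; rewrite horner_deg2_shift //; lra.
- by have := P_gt0 0 (lexx 0); rewrite addr0.
Qed.

Lemma dy_op_q p : dy (op_q p) = op_q (dy p).
Proof.
by apply/polyP => i; rewrite /op_q -!dy_dx !(coefB, coefCM, coef_dy) derivB deriv_mulC.
Qed.

Lemma eval2_op_q_deg2 p x y :
  (size p <= 3)%N -> eval2 (op_q p) x y = (slice y p).[x] - (slice y p)`_2.
Proof.
move=> sizep; have sizeP := leq_trans (size_slice_le y p) sizep.
rewrite eval2_slice /op_q /slice rmorphB rmorphM /= map_polyC /= horner_evalE hornerC.
rewrite -!/(slice y _) !slice_dx hornerD hornerN hornerM hornerC deriv2_deg2 //.
by field.
Qed.

Local Notation rc := (real_complex R).
Local Open Scope complex_scope.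

Lemma slice_complexify p y : slice y%:C (complexify p) = map_poly rc (slice y p).
Proof.
rewrite /slice /complexify -!map_poly_comp; apply: eq_map_poly => c /=.
by rewrite !horner_evalE horner_map.
Qed.

Lemma complexify_dy p : dy (complexify p) = complexify (dy p).
Proof.
by apply/polyP => i; rewrite /complexify !(coef_dy, coef_map_id0) ?map_poly0 ?deriv0 // deriv_map.
Qed.

Lemma real_stable_wronskian_le0 p y x :
  real_stable p -> (size p <= 3)%N -> (wronskian (slice y p) (slice y (dy p))).[x] <= 0.
Proof.
move=> stable_p sizep; apply: deg2_wronskian_le0 => [||z Imz_gt0].
- exact: leq_trans (size_slice_le y p) sizep.
- exact: leq_trans (size_slice_dy_le y p) sizep.
have := Im_deriv_conjc_le0 _ y (fun w Imw_gt0 => stable_p z w Imz_gt0 Imw_gt0).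
by rewrite deriv_horner_polyC complexify_dy -!/(eval2 _ z y%:C) !eval2_slice !slice_complexify.
Qed.

End Barriers.

Theorem lemma3p11 (R : realType) (p : {poly {poly R}}) (x0 y0 delta : R) :
  real_stable p -> quadratic_in_x p ->
  above_roots p x0 y0 -> above_roots (op_q p) (x0 + delta) y0 ->
  (delta = 1 -> barrier_y (op_q p) (x0 + delta) y0 <= barrier_y p x0 y0) /\
  (0 < delta < 1 -> barrier_x p x0 y0 <= delta / (1 - delta ^+ 2) ->
     barrier_y (op_q p) (x0 + delta) y0 <= barrier_y p x0 y0).
Proof.
move=> stable_p size_p above_p above_q.
have sizep : (size p <= 3)%N by rewrite size_p.
pose P := slice y0 p; pose S := slice y0 (dy p).
have P_gt0 t : 0 <= t -> 0 < P.[x0 + t].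
  by move=> t_ge0; have := above_p t 0 t_ge0 (lexx 0); rewrite addr0 eval2_slice.
have Pd_gt0 : 0 < P.[x0 + delta] - P`_2.
  by have := above_q 0 0 (lexx 0) (lexx 0); rewrite !addr0 eval2_op_q_deg2.
have W_le0 x := real_stable_wronskian_le0 p y0 x stable_p sizep.
rewrite /barrier_x /barrier_y dy_op_q !eval2_op_q_deg2 ?(leq_trans (size_dy_le p)) //.
rewrite !eval2_slice -/P -/S slice_dx.
have sizeP : (size P <= 3)%N := leq_trans (size_slice_le y0 p) sizep.
have sizeS : (size S <= 3)%N := leq_trans (size_slice_dy_le y0 p) sizep.
by split=> [d1 | d_range HPx]; apply: deg2_barrier_shift_le => //; [left | right].
Qed.
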